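(* Let $\boldsymbol X \in \mathbb{R}^{n\times d}$, $\boldsymbol y \in \mathbb{R}^n$, $\boldsymbol M = \boldsymbol X^\top \boldsymbol X$, $\boldsymbol r = \boldsymbol X^\top \boldsymbol y$. Assume (A1) $\boldsymbol r > \mathbf 0$ and (A2) $M_{ij}\le 0$ for all $i\neq j$. Let $\boldsymbol C>\mathbf 0$, $\boldsymbol k>\mathbf 0$ in $\mathbb{R}^d$, and for $\varepsilon>0$ let $\boldsymbol\theta^{(\varepsilon)}(t)$ solve $$\frac{\mathrm d \theta_i}{\mathrm d t} = \theta_i\Big(r_i - \sum_{j=1}^d M_{ij}\theta_j\Big),\quad i=1,\dots,d,$$ with $\boldsymbol\theta^{(\varepsilon)}(0) = (C_1\varepsilon^{k_1},\dots,C_d\varepsilon^{k_d})$. Using the rescaled time $s$ with $t = s\log\frac1\varepsilon$, define $w_i^{(\varepsilon)}(s) = \frac{\log\theta_i^{(\varepsilon)}(s\log\frac1\varepsilon)}{\log\varepsilon}$ and $\boldsymbol z^{(\varepsilon)}(s) = \int_0^s \boldsymbol\theta^{(\varepsilon)}(u\log\tfrac1\varepsilon)\,\mathrm du$. For $s\ge0$, let $(\boldsymbol w(s),\boldsymbol z(s))\in(\mathbb{R}^d)^2$ be the unique solution of the linear complementarity problem $$\boldsymbol w = \boldsymbol k - s\boldsymbol r + \boldsymbol M\boldsymbol z,\qquad \boldsymbol w\ge\mathbf 0,\quad \boldsymbol z\ge \mathbf 0,\quad \boldsymbol w^\top\boldsymbol z = 0.$$ Then $\boldsymbol w^{(\varepsilon)}(s)\to\boldsymbol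 w(s)$ and $\boldsymbol z^{(\varepsilon)}(s)\to\boldsymbol z(s)$ as $\varepsilon\to0$, uniformly for $s$ in compact subsets of $\mathbb{R}_{\ge0}$.
   Context: Vector inequalities are coordinatewise. Under (A1)–(A2), $\boldsymbol M$ is symmetric positive definite, so the linear complementarity problem above has a unique solution for each $s$. *)

(* Stdlib reals + Coquelicot. Vectors in R^d are functions
   nat -> R, only their values at indices 0..d-1 matter. *)
From Stdlib Require Import Reals.
From Coquelicot Require Import Coquelicot.
Open Scope R_scope.

Fixpoint sumr (d : nat) (f : nat -> R) : R :=
  match d with
  | O => 0
  | S m => sumr m f + f m
  end.

(* M = X^T X, for X an n x d matrix given by its entries X a i (a < n, i < d) *)
Definition gramM (n : nat) (X : nat -> nat -> R) (i j : nat) : R :=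
  sumr n (fun a => X a i * X a j).

Definition corr_r (n : nat) (X : nat -> nat -> R) (y : nat -> R) (i : nat) : R :=
  sumr n (fun a => X a i * y a).

Definition solves_ODE (d : nat) (M : nat -> nat -> R) (r : nat -> R)
  (theta0 : nat -> R) (theta : R -> nat -> R) : Prop :=
  (forall i, (i < d)%nat -> theta 0 i = theta0 i) /\
  (forall i, (i < d)%nat ->
     filterlim (fun t => theta t i) (at_right 0) (locally (theta 0 i))) /\
  (forall t, 0 < t -> forall i, (i < d)%nat ->
     is_derive (fun u => theta u i) t
       (theta t i * (r i - sumr d (fun j => M i j * theta t j)))).

Definition solves_LCP (d : nat) (M : nat -> nat -> R) (r k : nat -> R) (s : R)
  (w z : nat -> R) : Prop :=
  (forall i, (i < d)%nat ->
     w i = k i - s * r i + sumr d (fun j => M i j * z j) /\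
     0 <= w i /\ 0 <= z i) /\
  sumr d (fun i => w i * z i) = 0.

Definition w_eps (theta : R -> nat -> R) (eps s : R) (i : nat) : R :=
  ln (theta (s * ln (/ eps)) i) / ln eps.

Definition z_eps (theta : R -> nat -> R) (eps s : R) (i : nat) : R :=
  RInt (fun u => theta (u * ln (/ eps)) i) 0 s.

From Stdlib Require Import Reals Lra Lia Psatz.
From Coquelicot Require Import Coquelicot.
Open Scope R_scope.

(* Integrating the ODE gives [th_i(s L) = th_i(0) exp (L (s r_i - (M z^eps(s))_i))] with
   [L = ln (1/eps)], hence exactly [w^eps = k - s r + M z^eps - ln C / L]: the pair
   [(w^eps, z^eps)] satisfies the linear equation of the LCP up to [O(1/L)], and
   [z^eps >= 0].  The energy [th^T M th / 2 - r^T th] is nonincreasing along the flow,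
   and by (A1)-(A2) [M] is coercive ([c |v|_1^2 <= v^T M v]), so [th] is bounded
   uniformly in [eps]; hence [z^eps(s) <= s B] and [w^eps >= - ln B / L].  If
   [w^eps_i > dl] then [th_i <= exp (- L dl)], and by (A2) [w^eps_i] decreases while it
   stays above [dl]; so [z^eps_i w^eps_i <= O(dl) + O(exp (- L dl))]: complementarity holds
   approximately.  Coercivity turns these approximate LCP conditions into
   [c |z^eps - z|_1^2 <= O(dl) + O_dl(1/L)], and [w^eps - w = M (z^eps - z) + O(1/L)]. *)

(** * Finite sums *)

Lemma sumr_ext d f g : (forall i, (i < d)%nat -> f i = g i) -> sumr d f = sumr d g.
Proof.
  induction d as [|d IH]; intros H; simpl; trivial.
  rewrite IH by (intros; apply H; lia). rewrite H by lia. reflexivity.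
Qed.

Lemma sumr_plus d f g : sumr d (fun i => f i + g i) = sumr d f + sumr d g.
Proof. induction d as [|d IH]; simpl; [lra|]. rewrite IH. lra. Qed.

Lemma sumr_minus d f g : sumr d (fun i => f i - g i) = sumr d f - sumr d g.
Proof. induction d as [|d IH]; simpl; [lra|]. rewrite IH. lra. Qed.

Lemma sumr_mult_l d c f : sumr d (fun i => c * f i) = c * sumr d f.
Proof. induction d as [|d IH]; simpl; [lra|]. rewrite IH. lra. Qed.

Lemma sumr_mult_r d c f : sumr d (fun i => f i * c) = sumr d f * c.
Proof. induction d as [|d IH]; simpl; [lra|]. rewrite IH. lra. Qed.

Lemma sumr_const d c : sumr d (fun _ => c) = INR d * c.
Proof. induction d as [|d IH]; simpl sumr; [simpl; lra|]. rewrite IH, S_INR. lra. Qed.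

Lemma sumr_0 d : sumr d (fun _ => 0) = 0.
Proof. rewrite sumr_const. lra. Qed.

Lemma sumr_swap d e F :
  sumr d (fun i => sumr e (fun j => F i j)) = sumr e (fun j => sumr d (fun i => F i j)).
Proof.
  induction d as [|d IH]; simpl; [now rewrite sumr_0|].
  rewrite IH, <- sumr_plus. reflexivity.
Qed.

Lemma sumr_le d f g : (forall i, (i < d)%nat -> f i <= g i) -> sumr d f <= sumr d g.
Proof.
  induction d as [|d IH]; intros H; simpl; [lra|].
  apply Rplus_le_compat; [apply IH; intros; apply H|apply H]; lia.
Qed.

Lemma sumr_ge0 d f : (forall i, (i < d)%nat -> 0 <= f i) -> 0 <= sumr d f.
Proof. intros H. rewrite <- (sumr_0 d). now apply sumr_le. Qed.

Lemma sumr_le_const d f c : (forall i, (i < d)%nat -> f i <= c) -> sumr d f <= INR d * c.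
Proof. intros H. rewrite <- sumr_const. now apply sumr_le. Qed.

Lemma Rabs_sumr_le d f : Rabs (sumr d f) <= sumr d (fun i => Rabs (f i)).
Proof.
  induction d as [|d IH]; simpl; [rewrite Rabs_R0; lra|].
  eapply Rle_trans; [apply Rabs_triang|lra].
Qed.

Lemma sumr_ge_term d f i :
  (forall j, (j < d)%nat -> 0 <= f j) -> (i < d)%nat -> f i <= sumr d f.
Proof.
  induction d as [|d IH]; intros H Hi; simpl; [lia|].
  destruct (Nat.eq_dec i d) as [->|Hid].
  - assert (0 <= sumr d f) by (apply sumr_ge0; intros; apply H; lia). lra.
  - assert (f i <= sumr d f) by (apply IH; [intros; apply H|]; lia).
    assert (0 <= f d) by (apply H; lia). lra.
Qed.

Lemma sumr_le_term d f i :
  (i < d)%nat -> (forall j, (j < d)%nat -> j <> i -> f j <= 0) -> sumr d f <= f i.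
Proof.
  induction d as [|d IH]; intros Hi H; simpl; [lia|].
  destruct (Nat.eq_dec i d) as [->|Hid].
  - assert (sumr d f <= 0) by (rewrite <- (sumr_0 d); apply sumr_le; intros; apply H; lia). lra.
  - assert (sumr d f <= f i) by (apply IH; [|intros; apply H]; lia).
    assert (f d <= 0) by (apply H; lia). lra.
Qed.

Lemma exists_pos_lower_bound d f :
  (forall i, (i < d)%nat -> 0 < f i) -> exists m, 0 < m /\ forall i, (i < d)%nat -> m <= f i.
Proof.
  induction d as [|d IH]; intros H; [exists 1; split; [lra|lia]|].
  destruct IH as [m [Hm Hmf]]; [intros; apply H; lia|].
  exists (Rmin m (f d)). split; [apply Rmin_glb_lt; [|apply H]; auto|].
  intros i Hi. destruct (Nat.eq_dec i d) as [->|Hid]; [apply Rmin_r|].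
  eapply Rle_trans; [apply Rmin_l|apply Hmf; lia].
Qed.

Lemma exists_Rabs_bound d (f : nat -> nat -> R) :
  exists K, 0 <= K /\ forall i j, (i < d)%nat -> (j < d)%nat -> Rabs (f i j) <= K.
Proof.
  exists (sumr d (fun i => sumr d (fun j => Rabs (f i j)))).
  assert (Hrow : forall i, 0 <= sumr d (fun j => Rabs (f i j)))
    by (intros; apply sumr_ge0; intros; apply Rabs_pos).
  split; [now apply sumr_ge0|]. intros i j Hi Hj.
  eapply Rle_trans; [apply (sumr_ge_term d (fun j => Rabs (f i j))); auto; intros; apply Rabs_pos|].
  now apply (sumr_ge_term d (fun i => sumr d (fun j => Rabs (f i j)))).
Qed.

Lemma is_derive_sumr d (F : R -> nat -> R) (F' : nat -> R) x :
  (forall i, (i < d)%nat -> is_derive (fun s => F s i) x (F' i)) ->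
  is_derive (fun s => sumr d (F s)) x (sumr d F').
Proof.
  induction d as [|d IH]; intros H; simpl; [apply (is_derive_const 0 x)|].
  apply (is_derive_plus (fun s => sumr d (F s)) (fun s => F s d));
    [apply IH; intros; apply H|apply H]; lia.
Qed.

Lemma continuity_pt_sumr d (F : R -> nat -> R) x :
  (forall i, (i < d)%nat -> continuity_pt (fun t => F t i) x) ->
  continuity_pt (fun t => sumr d (F t)) x.
Proof.
  induction d as [|d IH]; intros H; simpl; [apply continuity_pt_const; now intros ? ?|].
  apply (continuity_pt_plus (fun t => sumr d (F t)) (fun t => F t d));
    [apply IH; intros; apply H|apply H]; lia.
Qed.

(** * Quadratic forms and coercivity *)

Definition quad (d : nat) (M : nat -> nat -> R) (v : nat -> R) : R :=
  sumr d (fun i => v i * sumr d (fun j => M i j * v j)).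

Lemma gramM_sym n X i j : gramM n X i j = gramM n X j i.
Proof. apply sumr_ext; intros; ring. Qed.

Lemma gramM_diag_ge0 n X i : 0 <= gramM n X i i.
Proof. apply sumr_ge0; intros; nra. Qed.

Lemma quad_gramM n d X v :
  quad d (gramM n X) v = sumr n (fun a => (sumr d (fun i => X a i * v i)) ^ 2).
Proof.
  unfold quad, gramM.
  transitivity (sumr d (fun i => sumr n (fun a => v i * X a i * sumr d (fun j => X a j * v j)))).
  - apply sumr_ext; intros i Hi. rewrite <- sumr_mult_l.
    transitivity (sumr d (fun j => sumr n (fun a => v i * X a i * (X a j * v j)))).
    + apply sumr_ext; intros j Hj. rewrite <- sumr_mult_r, <- sumr_mult_l.
      apply sumr_ext; intros; ring.
    + rewrite sumr_swap. apply sumr_ext; intros. rewrite <- sumr_mult_l.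
      apply sumr_ext; intros; ring.
  - rewrite sumr_swap. apply sumr_ext; intros a Ha. rewrite sumr_mult_r.
    replace (sumr d (fun i => v i * X a i)) with (sumr d (fun i => X a i * v i))
      by (apply sumr_ext; intros; ring).
    ring.
Qed.

Lemma sumr_corr_r n d X y v :
  sumr d (fun i => corr_r n X y i * v i) = sumr n (fun a => y a * sumr d (fun i => X a i * v i)).
Proof.
  unfold corr_r.
  transitivity (sumr d (fun i => sumr n (fun a => y a * (X a i * v i)))).
  - apply sumr_ext; intros. rewrite <- sumr_mult_r. apply sumr_ext; intros; ring.
  - rewrite sumr_swap. apply sumr_ext; intros. now rewrite sumr_mult_l.
Qed.

Lemma sumr_Cauchy_Schwarz n y u :
  0 < sumr n (fun a => y a ^ 2) ->
  (sumr n (fun a => y a * u a)) ^ 2 <= sumr n (fun a => y a ^ 2) * sumr n (fun a => u a ^ 2).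
Proof.
  intros HY.
  set (Y := sumr n (fun a => y a ^ 2)) in *. set (P := sumr n (fun a => y a * u a)).
  set (t := P / Y).
  assert (Hsq : 0 <= sumr n (fun a => (u a - t * y a) ^ 2))
    by (apply sumr_ge0; intros; apply pow2_ge_0).
  replace (sumr n (fun a => (u a - t * y a) ^ 2))
    with (sumr n (fun a => u a ^ 2) - t * P) in Hsq.
  2:{ transitivity (sumr n (fun a => u a ^ 2 + (-2 * t) * (y a * u a) + (t * t) * y a ^ 2)).
      - rewrite !sumr_plus, !sumr_mult_l. fold P Y. unfold t. field. lra.
      - apply sumr_ext; intros; ring. }
  unfold t in Hsq.
  assert (0 <= Y * (sumr n (fun a => u a ^ 2) - P / Y * P)) by (apply Rmult_le_pos; lra).
  replace (Y * (sumr n (fun a => u a ^ 2) - P / Y * P))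
    with (Y * sumr n (fun a => u a ^ 2) - P ^ 2) in * by (field; lra).
  lra.
Qed.

Lemma quad_Rabs_le d M v :
  (forall i j, (i < d)%nat -> (j < d)%nat -> i <> j -> M i j <= 0) ->
  quad d M (fun i => Rabs (v i)) <= quad d M v.
Proof.
  intros HM. apply sumr_le; intros i Hi. rewrite <- !sumr_mult_l.
  apply sumr_le; intros j Hj. destruct (Nat.eq_dec i j) as [<-|Hij].
  - replace (Rabs (v i) * (M i i * Rabs (v i))) with (M i i * (Rabs (v i) * Rabs (v i))) by ring.
    rewrite <- Rabs_mult, Rabs_right by nra. nra.
  - assert (M i j <= 0) by auto.
    assert (v i * v j <= Rabs (v i) * Rabs (v j)) by (rewrite <- Rabs_mult; apply Rle_abs).
    nra.
Qed.

(* By (A2), [v^T M v >= |v|^T M |v| = ||X |v|||^2], and by (A1) and Cauchy-Schwarz,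
   [min r * ||v||_1 <= r^T |v| = y^T X |v| <= ||y|| ||X |v|||]. *)
Lemma gramM_coercive n d X y :
  (forall i, (i < d)%nat -> 0 < corr_r n X y i) ->
  (forall i j, (i < d)%nat -> (j < d)%nat -> i <> j -> gramM n X i j <= 0) ->
  exists c, 0 < c /\
    forall v, c * (sumr d (fun i => Rabs (v i))) ^ 2 <= quad d (gramM n X) v.
Proof.
  intros HA1 HA2.
  destruct d as [|d']; [exists 1; split; [lra|intros; simpl; unfold quad; simpl; lra]|].
  set (d := S d') in *.
  destruct (exists_pos_lower_bound d _ HA1) as [m [Hm Hmr]].
  set (Y := sumr n (fun a => y a ^ 2)).
  assert (HY : 0 < Y).
  { destruct (Rle_lt_dec Y 0) as [HY0|]; auto. exfalso.
    assert (Hy0 : forall a, (a < n)%nat -> y a = 0).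
    { intros a Ha.
      assert (y a ^ 2 <= Y) by (apply (sumr_ge_term n (fun a => y a ^ 2)); auto; intros; nra).
      nra. }
    assert (Hr0 : corr_r n X y 0 = 0).
    { unfold corr_r. rewrite <- (sumr_0 n). apply sumr_ext; intros. rewrite Hy0; auto; ring. }
    specialize (HA1 0%nat ltac:(unfold d; lia)). lra. }
  exists (m ^ 2 / Y). split; [apply Rdiv_lt_0_compat; nra|]. intros v.
  set (av := fun i => Rabs (v i)).
  set (T := sumr d av).
  eapply Rle_trans; [|apply (quad_Rabs_le d _ v HA2)]. fold av. rewrite quad_gramM.
  assert (HT : 0 <= T) by (apply sumr_ge0; intros; apply Rabs_pos).
  assert (Hlow : m * T <= sumr n (fun a => y a * sumr d (fun i => X a i * av i))).
  { rewrite <- sumr_corr_r. unfold T. rewrite <- sumr_mult_l. apply sumr_le; intros i Hi.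
    assert (m <= corr_r n X y i) by auto. assert (0 <= av i) by apply Rabs_pos. nra. }
  assert (HCS := sumr_Cauchy_Schwarz n y (fun a => sumr d (fun i => X a i * av i)) HY).
  assert ((m * T) ^ 2 <= Y * sumr n (fun a => (sumr d (fun i => X a i * av i)) ^ 2)).
  { eapply Rle_trans; [|exact HCS]. apply pow_incr. split; [nra|exact Hlow]. }
  apply (Rmult_le_reg_l Y); auto.
  replace (Y * (m ^ 2 / Y * T ^ 2)) with ((m * T) ^ 2) by (field; lra). assumption.
Qed.

(** * Real-variable calculus *)

Lemma is_derive_eq (f : R -> R) x l l' : is_derive f x l -> l = l' -> is_derive f x l'.
Proof. now intros H <-. Qed.

Lemma is_derive_scaled (f : R -> R) L x l :
  is_derive f (x * L) l -> is_derive (fun t => f (t * L)) x (l * L).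
Proof.
  intros Hf. eapply is_derive_eq.
  - apply (is_derive_comp f (fun t => t * L) x l L); [exact Hf|].
    auto_derive; [trivial|ring].
  - cbn. unfold mult. simpl. ring.
Qed.

Lemma is_derive_exp_comp (f : R -> R) x l :
  is_derive f x l -> is_derive (fun t => exp (f t)) x (exp (f x) * l).
Proof.
  intros Hf. eapply is_derive_eq; [apply (is_derive_comp exp f x (exp (f x)) l); auto|].
  - apply is_derive_exp.
  - cbn. unfold mult. simpl. ring.
Qed.

Lemma continuity_pt_is_derive (g : R -> R) x l : is_derive g x l -> continuity_pt g x.
Proof.
  intros H. apply continuity_pt_filterlim, (ex_derive_continuous (V := R_NormedModule)).
  now exists l.
Qed.

Lemma at_right_eps (g : R -> R) x l : filterlim g (at_right x) (locally l) ->
  forall e, 0 < e -> exists eta, 0 < eta /\ forall t, x < t < x + eta -> Rabs (g t - l) < e.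
Proof.
  intros H e He. destruct (proj1 (filterlim_locally g l) H (mkposreal e He)) as [eta Heta].
  exists eta. split; [apply cond_pos|]. intros t Ht. apply Heta; [|lra].
  apply Rabs_lt_between'. simpl. lra.
Qed.

Lemma continuity_pt_eps (g : R -> R) x : continuity_pt g x ->
  forall e, 0 < e -> exists eta, 0 < eta /\ forall t, Rabs (t - x) < eta -> Rabs (g t - g x) < e.
Proof.
  intros H e He. destruct (H e He) as [eta [Heta Hg]]. exists eta. split; auto.
  intros t Ht. destruct (Req_dec t x) as [->|Htx]; [rewrite Rminus_eq_0, Rabs_R0; auto|].
  apply (Hg t). repeat split; auto.
Qed.

Lemma mean_value (g : R -> R) a b : a < b ->
  (forall x, a <= x <= b -> ex_derive g x) ->
  exists c, a <= c <= b /\ g b - g a = Derive g c * (b - a).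
Proof.
  intros Hab Hg. destruct (MVT_gen g a b (Derive g)) as [c [Hc Hgc]].
  - intros x Hx. rewrite Rmin_left, Rmax_right in Hx by lra. apply Derive_correct, Hg. lra.
  - intros x Hx. rewrite Rmin_left, Rmax_right in Hx by lra.
    apply (continuity_pt_is_derive g x (Derive g x)), Derive_correct, Hg, Hx.
  - rewrite Rmin_left, Rmax_right in Hc by lra. now exists c.
Qed.

Lemma le_of_derive_nonpos (g : R -> R) a b : a <= b ->
  (forall x, a <= x <= b -> exists l, is_derive g x l /\ l <= 0) -> g b <= g a.
Proof.
  intros Hab Hg. destruct (Req_dec a b) as [->|Hab']; [lra|].
  destruct (mean_value g a b) as [c [Hc Hgc]];
    [lra|intros x Hx; destruct (Hg x Hx) as [l [Hl _]]; now exists l|].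
  destruct (Hg c Hc) as [l [Hl Hl0]]. rewrite (is_derive_unique g c l Hl) in Hgc.
  assert (l * (b - a) <= 0) by (apply Rmult_le_0_r; lra). lra.
Qed.

Lemma le_start_of_derive_nonpos (g : R -> R) :
  continuity_pt g 0 ->
  (forall s, 0 < s -> exists l, is_derive g s l /\ l <= 0) ->
  forall s, 0 <= s -> g s <= g 0.
Proof.
  intros Hg0 Hg s Hs. destruct (Rle_lt_dec (g s) (g 0)) as [|Hgs]; auto. exfalso.
  assert (Hs0 : 0 < s) by (destruct (Req_dec s 0) as [->|]; lra).
  destruct (continuity_pt_eps g 0 Hg0 (g s - g 0)) as [eta [Heta Hnear]]; [lra|].
  set (t := Rmin (eta / 2) (s / 2)).
  assert (Ht : 0 < t < s /\ t < eta).
  { unfold t. generalize (Rmin_l (eta / 2) (s / 2)) (Rmin_r (eta / 2) (s / 2)).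
    generalize (Rmin_glb_lt (eta / 2) (s / 2) 0 ltac:(lra) ltac:(lra)). lra. }
  assert (Hgt : Rabs (g t - g 0) < g s - g 0) by (apply Hnear; rewrite Rminus_0_r, Rabs_right; lra).
  assert (g s <= g t) by (apply le_of_derive_nonpos; [lra|intros x Hx; apply Hg; lra]).
  apply Rabs_def2 in Hgt. lra.
Qed.

Lemma eq_start_of_derive_0 (g : R -> R) :
  continuity_pt g 0 ->
  (forall s, 0 < s -> is_derive g s 0) ->
  forall s, 0 <= s -> g s = g 0.
Proof.
  intros Hg0 Hg s Hs. apply Rle_antisym.
  - apply le_start_of_derive_nonpos; auto. intros x Hx. exists 0. split; [auto|lra].
  - assert (- g s <= - g 0); [|lra].
    apply (le_start_of_derive_nonpos (fun t => - g t)); auto.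
    + now apply continuity_pt_opp.
    + intros x Hx. exists (- 0). split; [apply (is_derive_opp g x 0), Hg, Hx|lra].
Qed.

Lemma stays_below (g : R -> R) a b lvl : a <= b ->
  (forall x, a <= x <= b -> exists l, is_derive g x l /\ (lvl < g x -> l < 0)) ->
  g a <= lvl -> g b <= lvl.
Proof.
  intros Hab Hg Ha.
  assert (Hcont : forall x, a <= x <= b -> continuity_pt g x).
  { intros x Hx. destruct (Hg x Hx) as [l [Hl _]]. now apply (continuity_pt_is_derive g x l). }
  destruct (continuity_ab_maj g a b Hab Hcont) as [m [Hmax Hm]].
  destruct (Rle_lt_dec (g m) lvl) as [|Hgm]; [specialize (Hmax b); lra|]. exfalso.
  assert (Ham : a < m) by (destruct (Req_dec a m) as [<-|]; lra).
  destruct (continuity_pt_eps g m (Hcont m Hm) (g m - lvl)) as [eta [Heta Hnear]]; [lra|].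
  set (x0 := Rmax a (m - eta / 2)).
  assert (Hx0 : a <= x0 < m /\ m - x0 < eta).
  { unfold x0. generalize (Rmax_l a (m - eta / 2)) (Rmax_r a (m - eta / 2)).
    generalize (Rmax_lub_lt a (m - eta / 2) m ltac:(lra) ltac:(lra)). lra. }
  destruct (mean_value g x0 m) as [c [Hc Hgc]];
    [lra|intros x Hx; destruct (Hg x ltac:(lra)) as [l [Hl _]]; now exists l|].
  destruct (Hg c ltac:(lra)) as [l [Hl Hl0]]. rewrite (is_derive_unique g c l Hl) in Hgc.
  assert (Hgc' : lvl < g c).
  { assert (Habs : Rabs (g c - g m) < g m - lvl) by (apply Hnear, Rabs_def1; lra).
    apply Rabs_def2 in Habs. lra. }
  assert (l * (m - x0) < 0) by (apply Rmult_neg_pos; [apply Hl0|]; lra).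
  assert (g x0 <= g m) by (apply Hmax; lra). lra.
Qed.

Lemma exp_neg_lt_inv x : 0 < x -> exp (- x) < / x.
Proof.
  intros Hx. rewrite exp_Ropp. generalize (exp_ineq1 x ltac:(lra)) (exp_pos x). intros.
  apply Rinv_lt_contravar; nra.
Qed.

(** * The Lotka-Volterra flow *)

Definition energy (d : nat) (M : nat -> nat -> R) (r v : nat -> R) : R :=
  / 2 * quad d M v - sumr d (fun i => r i * v i).

Lemma is_derive_quad d M (v : R -> nat -> R) (v' : nat -> R) x :
  (forall i j, (i < d)%nat -> (j < d)%nat -> M i j = M j i) ->
  (forall i, (i < d)%nat -> is_derive (fun s => v s i) x (v' i)) ->
  is_derive (fun s => quad d M (v s)) x
    (2 * sumr d (fun i => v' i * sumr d (fun j => M i j * v x j))).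
Proof.
  intros HM Hv. eapply is_derive_eq.
  - apply (is_derive_sumr d (fun s i => v s i * sumr d (fun j => M i j * v s j))).
    intros i Hi.
    apply (is_derive_mult (fun s => v s i) (fun s => sumr d (fun j => M i j * v s j)));
      [auto| |intros; apply Rmult_comm].
    apply (is_derive_sumr d (fun s j => M i j * v s j)). intros j Hj.
    now apply is_derive_scal, Hv.
  - unfold plus, mult; simpl. rewrite sumr_plus.
    replace (sumr d (fun i => v x i * sumr d (fun j => M i j * v' j)))
      with (sumr d (fun i => v' i * sumr d (fun j => M i j * v x j))); [ring|].
    rewrite <- (sumr_ext d (fun j => sumr d (fun i => v x i * M i j * v' j)))
      by (intros j Hj; rewrite <- sumr_mult_l; apply sumr_ext; intros i Hi;
          rewrite (HM j i); auto; ring).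
    rewrite <- sumr_swap. apply sumr_ext; intros i Hi. rewrite <- sumr_mult_l.
    apply sumr_ext; intros; ring.
Qed.

Section LotkaVolterra.

Context {d : nat} {M : nat -> nat -> R} {r th0 : nat -> R}.
Variables (th : R -> nat -> R) (L : R).
Hypothesis HL : 0 < L.
Hypothesis Hsol : solves_ODE d M r th0 th.

(* [th] is only specified on [0, +oo); extending it by [th 0] to negative times makes
   it continuous on all of R, so its integrals are differentiable everywhere. *)
Definition theta_ext (t : R) (i : nat) : R := th (Rmax 0 t) i.

Definition zint (j : nat) (s : R) : R := RInt (fun u => theta_ext (u * L) j) 0 s.

Lemma theta_ext_eq t i : 0 <= t -> theta_ext t i = th t i.
Proof. intros Ht. unfold theta_ext. now rewrite Rmax_right. Qed.

Lemma is_derive_theta t i : 0 < t -> (i < d)%nat ->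
  is_derive (fun u => th u i) t (th t i * (r i - sumr d (fun j => M i j * th t j))).
Proof. intros Ht Hi. destruct Hsol as [_ [_ Hder]]. now apply Hder. Qed.

Lemma theta_ext_continuous i : (i < d)%nat -> forall t, continuity_pt (fun u => theta_ext u i) t.
Proof.
  intros Hi t. destruct (Rtotal_order t 0) as [Ht|[->|Ht]].
  - apply (continuity_pt_ext_loc (fun _ => th 0 i)).
    + apply (filter_imp (fun u => u < 0)); [|now apply open_lt].
      intros u Hu. unfold theta_ext. now rewrite Rmax_left by lra.
    + apply continuity_pt_const. now intros ? ?.
  - destruct Hsol as [_ [Hright _]]. intros e He.
    destruct (at_right_eps _ 0 _ (Hright i Hi) e He) as [eta [Heta Hnear]].
    exists eta. split; auto. intros t [_ Ht]. simpl in Ht |- *. unfold R_dist in *.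
    unfold theta_ext. rewrite (Rmax_left 0 0) by lra.
    destruct (Rle_lt_dec t 0).
    + rewrite Rmax_left, Rminus_eq_0, Rabs_R0 by lra. exact He.
    + rewrite Rmax_right by lra. apply Hnear. apply Rabs_def2 in Ht. lra.
  - apply (continuity_pt_ext_loc (fun u => th u i)).
    + apply (filter_imp (fun u => 0 < u)); [|now apply open_gt].
      intros u Hu. symmetry. apply theta_ext_eq. lra.
    + eapply continuity_pt_is_derive, is_derive_theta; auto.
Qed.

Lemma theta_ext_scaled_continuous j : (j < d)%nat ->
  forall u, continuity_pt (fun u => theta_ext (u * L) j) u.
Proof.
  intros Hj u. apply (continuity_pt_comp (fun u => u * L) (fun t => theta_ext t j)).
  - apply (continuity_pt_is_derive _ _ L). auto_derive; [trivial|ring].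
  - now apply theta_ext_continuous.
Qed.

Lemma ex_RInt_theta_ext j a b : (j < d)%nat -> ex_RInt (fun u => theta_ext (u * L) j) a b.
Proof.
  intros Hj. apply (ex_RInt_continuous (V := R_CompleteNormedModule)). intros u _.
  now apply continuity_pt_filterlim, theta_ext_scaled_continuous.
Qed.

Lemma zint_0 j : zint j 0 = 0.
Proof. apply (RInt_point (V := R_CompleteNormedModule)). Qed.

Lemma is_derive_zint j s : (j < d)%nat -> is_derive (zint j) s (theta_ext (s * L) j).
Proof.
  intros Hj. apply (is_derive_RInt (fun u => theta_ext (u * L) j) (zint j) 0 s).
  - apply (filter_forall (fun b => is_RInt _ 0 b (zint j b))). intros b.
    apply (RInt_correct (V := R_CompleteNormedModule)), ex_RInt_theta_ext, Hj.
  - now apply continuity_pt_filterlim, theta_ext_scaled_continuous.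
Qed.

Lemma is_derive_growth i s :
  is_derive (fun s => s * r i - sumr d (fun j => M i j * zint j s)) s
    (r i - sumr d (fun j => M i j * theta_ext (s * L) j)).
Proof.
  apply (is_derive_minus (fun s => s * r i)); [auto_derive; [trivial|ring]|].
  apply (is_derive_sumr d (fun s j => M i j * zint j s)). intros j Hj.
  now apply is_derive_scal, is_derive_zint.
Qed.

Lemma is_derive_theta_scaled i s : (i < d)%nat -> 0 < s ->
  is_derive (fun u => theta_ext (u * L) i) s
    (theta_ext (s * L) i * (r i - sumr d (fun j => M i j * theta_ext (s * L) j)) * L).
Proof.
  intros Hi Hs.
  apply (is_derive_ext_loc (fun u => th (u * L) i)).
  - apply (filter_imp (fun u => 0 < u)); [|now apply open_gt].
    intros u Hu. symmetry. apply theta_ext_eq. nra.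
  - rewrite theta_ext_eq by nra.
    rewrite (sumr_ext d _ (fun j => M i j * th (s * L) j))
      by (intros; rewrite theta_ext_eq by nra; reflexivity).
    apply (is_derive_scaled (fun u => th u i)), is_derive_theta; [nra|auto].
Qed.


Lemma theta_formula i s : (i < d)%nat -> 0 <= s ->
  th (s * L) i = th0 i * exp (L * (s * r i - sumr d (fun j => M i j * zint j s))).
Proof.
  intros Hi Hs.
  set (A := fun s => s * r i - sumr d (fun j => M i j * zint j s)).
  set (P := fun s => theta_ext (s * L) i * exp (- L * A s)).
  assert (HA0 : A 0 = 0).
  { unfold A. rewrite (sumr_ext d _ (fun _ => 0)) by (intros; rewrite zint_0; ring).
    rewrite sumr_0. ring. }
  assert (HP : P s = P 0).
  { apply eq_start_of_derive_0; auto.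
    - apply continuity_pt_mult; [now apply theta_ext_scaled_continuous|].
      eapply continuity_pt_is_derive.
      apply (is_derive_exp_comp (fun s => - L * A s)), is_derive_scal, is_derive_growth.
    - intros x Hx. unfold P. eapply is_derive_eq.
      + apply (is_derive_mult (fun s => theta_ext (s * L) i) (fun s => exp (- L * A s)));
          [apply is_derive_theta_scaled; auto| |intros; apply Rmult_comm].
        apply (is_derive_exp_comp (fun s => - L * A s)), is_derive_scal, is_derive_growth.
      + unfold plus, mult, scal; simpl. unfold mult; simpl. ring. }
  unfold P in HP. rewrite HA0, Rmult_0_r, exp_0, Rmult_1_r, Rmult_0_l, !theta_ext_eq in HP by nra.
  destruct Hsol as [Hinit _]. rewrite Hinit in HP by auto.
  rewrite <- HP, Rmult_assoc, <- exp_plus. fold (A s).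
  replace (- L * A s + L * A s) with 0 by ring. rewrite exp_0. ring.
Qed.

Lemma theta_pos i s : (forall j, (j < d)%nat -> 0 < th0 j) -> (i < d)%nat -> 0 <= s ->
  0 < th (s * L) i.
Proof.
  intros Hth0 Hi Hs. rewrite theta_formula by auto.
  apply Rmult_lt_0_compat; [auto|apply exp_pos].
Qed.

Lemma zint_le_of_theta_le j s a : (j < d)%nat -> 0 <= s ->
  (forall u, 0 < u < s -> th (u * L) j <= a) -> zint j s <= s * a.
Proof.
  intros Hj Hs Ha. unfold zint.
  replace (s * a) with (RInt (fun _ => a) 0 s)
    by (rewrite RInt_const; unfold scal; simpl; unfold mult; simpl; ring).
  apply RInt_le; auto using ex_RInt_theta_ext.
  - apply (ex_RInt_const (V := R_NormedModule)).
  - intros u Hu. rewrite theta_ext_eq by nra. now apply Ha.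
Qed.

Lemma zint_ge0 j s : (forall i, (i < d)%nat -> 0 < th0 i) -> (j < d)%nat -> 0 <= s ->
  0 <= zint j s.
Proof.
  intros Hth0 Hj Hs. unfold zint.
  replace 0 with (RInt (fun _ => 0) 0 s) at 1
    by (rewrite RInt_const; unfold scal; simpl; unfold mult; simpl; ring).
  apply RInt_le; auto using ex_RInt_theta_ext.
  - apply (ex_RInt_const (V := R_NormedModule)).
  - intros u Hu. rewrite theta_ext_eq by nra. apply Rlt_le, theta_pos; auto. lra.
Qed.

(* Along the flow, [d/dt energy = - sum_i th_i (r_i - (M th)_i)^2]. *)
Lemma energy_nonincreasing s :
  (forall i j, (i < d)%nat -> (j < d)%nat -> M i j = M j i) ->
  (forall i, (i < d)%nat -> 0 < th0 i) -> 0 <= s ->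
  energy d M r (th (s * L)) <= energy d M r (th 0).
Proof.
  intros HM Hth0 Hs.
  set (E := fun s => energy d M r (fun i => theta_ext (s * L) i)).
  assert (HE : forall s, 0 <= s -> E s = energy d M r (th (s * L))).
  { intros x Hx. unfold E, theta_ext. now rewrite Rmax_right by nra. }
  rewrite <- HE, <- (Rmult_0_l L), <- HE by lra. apply le_start_of_derive_nonpos; auto.
  - unfold E, energy, quad. apply continuity_pt_minus.
    + apply continuity_pt_scal, continuity_pt_sumr. intros i Hi.
      apply continuity_pt_mult; [now apply theta_ext_scaled_continuous|].
      apply continuity_pt_sumr. intros j Hj.
      apply continuity_pt_scal. now apply theta_ext_scaled_continuous.
    + apply continuity_pt_sumr. intros i Hi.
      apply continuity_pt_scal. now apply theta_ext_scaled_continuous.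
  - intros x Hx.
    set (v := fun i => theta_ext (x * L) i).
    set (g := fun i => r i - sumr d (fun j => M i j * v j)).
    exists (- L * sumr d (fun i => v i * g i ^ 2)). split.
    + unfold E, energy. eapply is_derive_eq.
      * apply (is_derive_minus (fun s => / 2 * quad d M (fun i => theta_ext (s * L) i))
                                (fun s => sumr d (fun i => r i * theta_ext (s * L) i))).
        -- apply is_derive_scal, (is_derive_quad d M (fun s i => theta_ext (s * L) i)); auto.
           intros. now apply is_derive_theta_scaled.
        -- apply (is_derive_sumr d (fun s i => r i * theta_ext (s * L) i)). intros.
           now apply is_derive_scal, is_derive_theta_scaled.
      * unfold minus, plus, opp; simpl.
        match goal with |- / 2 * (2 * ?X) + - ?Y = _ =>
          replace (/ 2 * (2 * X) + - Y) with (X - Y) by field end.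
        rewrite <- sumr_minus, <- sumr_mult_l. apply sumr_ext; intros i Hi. unfold g, v. ring.
    + assert (0 <= sumr d (fun i => v i * g i ^ 2)); [|nra].
      apply sumr_ge0; intros i Hi. unfold v. rewrite theta_ext_eq by nra.
      generalize (theta_pos i x Hth0 Hi ltac:(lra)). nra.
Qed.

End LotkaVolterra.

(** * The linear complementarity problem *)

Lemma lcp_z_le d M r k s w z c K :
  0 < c -> (forall v, c * (sumr d (fun i => Rabs (v i))) ^ 2 <= quad d M v) ->
  0 <= K -> (forall i, (i < d)%nat -> r i <= K) ->
  (forall i, (i < d)%nat -> 0 <= k i) -> 0 <= s ->
  solves_LCP d M r k s w z -> forall i, (i < d)%nat -> z i <= s * K / c.
Proof.
  intros Hc0 Hc HK0 HK Hk Hs [Hlcp Hcompl] i Hi.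
  set (T := sumr d z).
  assert (Hz : forall j, (j < d)%nat -> 0 <= z j) by (intros j Hj; apply (Hlcp j Hj)).
  assert (HT0 : 0 <= T) by now apply sumr_ge0.
  assert (HQ : quad d M z <= s * K * T).
  { unfold quad.
    rewrite (sumr_ext d _ (fun j => w j * z j + ((-1) * (z j * k j) + s * (z j * r j))))
      by (intros j Hj; destruct (Hlcp j Hj) as [-> _]; ring).
    rewrite !sumr_plus, Hcompl, !sumr_mult_l.
    assert (0 <= sumr d (fun j => z j * k j))
      by (apply sumr_ge0; intros j Hj; generalize (Hk j Hj) (Hz j Hj); nra).
    assert (sumr d (fun j => z j * r j) <= K * T).
    { unfold T. rewrite <- sumr_mult_l. apply sumr_le; intros j Hj.
      generalize (HK j Hj) (Hz j Hj). nra. }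
    nra. }
  assert (Hcz := Hc z).
  rewrite (sumr_ext d _ z) in Hcz by (intros; apply Rabs_right, Rle_ge; auto). fold T in Hcz.
  assert (HcT : c * T <= s * K).
  { destruct (Req_dec T 0) as [->|HT]; [nra|]. apply (Rmult_le_reg_r T); nra. }
  assert (z i <= T) by now apply sumr_ge_term.
  apply (Rmult_le_reg_l c); auto. replace (c * (s * K / c)) with (s * K) by (field; lra). nra.
Qed.

(* Expand [(z' - z)^T M (z' - z) = sum_i (z'_i - z_i) (w'_i - a_i - w_i)] termwise:
   [z'_i w'_i <= gam], [- z'_i w_i <= 0], [- z_i w'_i <= Zb beta], [sum_i z_i w_i = 0]. *)
Lemma lcp_perturbation d M c (z' w' z w a : nat -> R) (beta gam Zb Dm al : R) :
  (forall v, c * (sumr d (fun i => Rabs (v i))) ^ 2 <= quad d M v) -> 0 <= beta ->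
  (forall i, (i < d)%nat -> w' i - a i - w i = sumr d (fun j => M i j * (z' j - z j))) ->
  (forall i, (i < d)%nat -> 0 <= z' i /\ - beta <= w' i /\ z' i * w' i <= gam) ->
  (forall i, (i < d)%nat -> 0 <= w i /\ 0 <= z i <= Zb) ->
  sumr d (fun i => w i * z i) = 0 ->
  (forall i, (i < d)%nat -> Rabs (a i) <= al /\ Rabs (z' i - z i) <= Dm) ->
  c * (sumr d (fun i => Rabs (z' i - z i))) ^ 2 <= INR d * (gam + Zb * beta + Dm * al).
Proof.
  intros Hc Hbeta Hrel Happrox Hexact Hcompl Hsmall.
  eapply Rle_trans; [apply (Hc (fun i => z' i - z i))|]. unfold quad.
  rewrite (sumr_ext d _ (fun i => ((z' i - z i) * (w' i - a i - w i) - w i * z i) + w i * z i))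
    by (intros i Hi; rewrite Hrel by auto; ring).
  rewrite sumr_plus, Hcompl, Rplus_0_r. apply sumr_le_const. intros i Hi.
  destruct (Happrox i Hi) as [Hz' [Hw' Hgam]]. destruct (Hexact i Hi) as [Hw Hz].
  destruct (Hsmall i Hi) as [Ha HD].
  assert (- ((z' i - z i) * a i) <= Dm * al).
  { eapply Rle_trans; [apply Rle_abs|]. rewrite Rabs_Ropp, Rabs_mult.
    apply Rmult_le_compat; auto using Rabs_pos. }
  assert (z i * - w' i <= Zb * beta) by nra.
  assert (0 <= z' i * w i) by nra.
  replace ((z' i - z i) * (w' i - a i - w i) - w i * z i)
    with (z' i * w' i - z' i * w i + z i * - w' i - (z' i - z i) * a i) by ring.
  lra.
Qed.

(** * Convergence of the rescaled solution *)

Section Convergence.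

Variables (n d : nat) (X : nat -> nat -> R) (y C k : nat -> R) (theta : R -> R -> nat -> R).
Local Notation M := (gramM n X).
Local Notation r := (corr_r n X y).
Hypothesis HA2 : forall i j, (i < d)%nat -> (j < d)%nat -> i <> j -> M i j <= 0.
Hypothesis HC : forall i, (i < d)%nat -> 0 < C i.
Hypothesis Hk : forall i, (i < d)%nat -> 0 < k i.
Hypothesis Htheta : forall eps, 0 < eps < 1 ->
  solves_ODE d M r (fun i => C i * Rpower eps (k i)) (theta eps).

Variables (c rmin K : R).
Hypothesis Hc0 : 0 < c.
Hypothesis Hcoer : forall v, c * (sumr d (fun i => Rabs (v i))) ^ 2 <= quad d M v.
Hypothesis Hrmin : 0 < rmin.
Hypothesis Hr_ge : forall i, (i < d)%nat -> rmin <= r i.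
Hypothesis HK0 : 0 <= K.
Hypothesis HK : forall i j, (i < d)%nat -> (j < d)%nat ->
  Rabs (r i) + Rabs (k i) + Rabs (ln (C i)) + Rabs (M i j) <= K.

Variables (w z : R -> nat -> R) (S : R).
Hypothesis HS : 0 <= S.
Hypothesis Hwz : forall s, 0 <= s -> solves_LCP d M r k s (w s) (z s).

Lemma Rabs_r_le i : (i < d)%nat -> Rabs (r i) <= K.
Proof.
  intros Hi. generalize (HK i i Hi Hi) (Rabs_pos (k i)) (Rabs_pos (ln (C i))) (Rabs_pos (M i i)).
  lra.
Qed.

Lemma Rabs_k_le i : (i < d)%nat -> Rabs (k i) <= K.
Proof.
  intros Hi. generalize (HK i i Hi Hi) (Rabs_pos (r i)) (Rabs_pos (ln (C i))) (Rabs_pos (M i i)).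
  lra.
Qed.

Lemma Rabs_ln_C_le i : (i < d)%nat -> Rabs (ln (C i)) <= K.
Proof.
  intros Hi. generalize (HK i i Hi Hi) (Rabs_pos (r i)) (Rabs_pos (k i)) (Rabs_pos (M i i)).
  lra.
Qed.

Lemma Rabs_M_le i j : (i < d)%nat -> (j < d)%nat -> Rabs (M i j) <= K.
Proof.
  intros Hi Hj. generalize (HK i j Hi Hj) (Rabs_pos (r i)) (Rabs_pos (k i)) (Rabs_pos (ln (C i))).
  lra.
Qed.

(* Uniformly in [eps] and [s <= S]: [F0] bounds the initial energy, [B] the solution [th],
   [Zb] the LCP solution [z], [Wup] the rescaled [|w^eps|] and [Dm] [|z^eps - z|]. *)
Let F0 := / 2 * sumr d (fun i => sumr d (fun j => Rabs (M i j) * (C i * C j))).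
Let B := 1 + (2 * F0 + 2 * K) / c.
Let Zb := S * K / c.
Let Wup := 2 * K + S * K + INR d * K * (S * B).
Let Dm := S * B + Zb.

Lemma F0_ge0 : 0 <= F0.
Proof.
  apply Rmult_le_pos; [lra|]. apply sumr_ge0; intros i Hi. apply sumr_ge0; intros j Hj.
  generalize (HC i Hi) (HC j Hj) (Rabs_pos (M i j)). intros. apply Rmult_le_pos; nra.
Qed.

Lemma B_ge1 : 1 <= B.
Proof.
  unfold B. generalize F0_ge0. intros.
  assert (0 <= (2 * F0 + 2 * K) / c) by (apply Rdiv_le_0_compat; lra). lra.
Qed.

Lemma Wup_ge0 : 0 <= Wup.
Proof.
  unfold Wup. generalize B_ge1 (pos_INR d). intros.
  assert (0 <= INR d * K * (S * B)) by (repeat apply Rmult_le_pos; lra). nra.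
Qed.

Lemma z_le_Zb s i : 0 <= s <= S -> (i < d)%nat -> 0 <= z s i <= Zb.
Proof.
  intros Hs Hi. split; [apply (proj1 (Hwz s ltac:(lra)) i Hi)|].
  assert (Hr : forall j, (j < d)%nat -> r j <= K)
    by (intros j Hj; eapply Rle_trans; [apply Rle_abs|now apply Rabs_r_le]).
  assert (Hk0 : forall j, (j < d)%nat -> 0 <= k j) by (intros j Hj; apply Rlt_le, Hk, Hj).
  eapply Rle_trans; [apply (lcp_z_le d M r k s (w s) (z s) c K); auto; try lra; apply Hwz; lra|].
  unfold Zb, Rdiv. apply Rmult_le_compat_r; [apply Rlt_le, Rinv_0_lt_compat; lra|nra].
Qed.

Section Fixed_eps.

Variable eps : R.
Hypothesis Heps : 0 < eps < 1.
Local Notation L := (ln (/ eps)).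
Local Notation th := (theta eps).

Lemma L_pos : 0 < L.
Proof.
  rewrite ln_Rinv by lra. assert (ln eps < ln 1) by (apply ln_increasing; lra).
  rewrite ln_1 in *. lra.
Qed.

Lemma init_pos i : (i < d)%nat -> 0 < C i * Rpower eps (k i).
Proof. intros Hi. apply Rmult_lt_0_compat; [auto|apply exp_pos]. Qed.

Lemma init_le i : (i < d)%nat -> C i * Rpower eps (k i) <= C i.
Proof.
  intros Hi. assert (Rpower eps (k i) < 1); [|generalize (HC i Hi); nra].
  unfold Rpower. rewrite <- exp_0. apply exp_increasing.
  generalize (Hk i Hi) L_pos. rewrite ln_Rinv by lra. nra.
Qed.

Let Hsol : solves_ODE d M r (fun i => C i * Rpower eps (k i)) th := Htheta eps Heps.

Let W i s := k i - ln (C i) / L - s * r i + sumr d (fun j => M i j * zint th L j s).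

Lemma theta_eps_pos i s : (i < d)%nat -> 0 <= s -> 0 < th (s * L) i.
Proof. intros Hi Hs. exact (theta_pos th L L_pos Hsol i s init_pos Hi Hs). Qed.

Lemma theta_eq_exp i s : (i < d)%nat -> 0 <= s -> th (s * L) i = exp (- L * W i s).
Proof.
  intros Hi Hs. rewrite (theta_formula th L L_pos Hsol) by auto.
  unfold Rpower, W. rewrite <- (exp_ln (C i)) at 1 by auto. rewrite <- !exp_plus. f_equal.
  generalize L_pos. rewrite !ln_Rinv by lra. intros HL. field. lra.
Qed.

Lemma w_eps_eq i s : (i < d)%nat -> 0 <= s -> w_eps th eps s i = W i s.
Proof.
  intros Hi Hs. unfold w_eps. rewrite theta_eq_exp, ln_exp by auto.
  generalize L_pos. rewrite !ln_Rinv by lra. intros HL. field. lra.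
Qed.

Lemma z_eps_eq i s : 0 <= s -> z_eps th eps s i = zint th L i s.
Proof.
  intros Hs. apply RInt_ext. intros u Hu. rewrite Rmin_left, Rmax_right in Hu by lra.
  generalize L_pos. intros. rewrite theta_ext_eq by nra. reflexivity.
Qed.

Lemma energy_init_le : energy d M r (th 0) <= F0.
Proof.
  destruct Hsol as [Hinit _].
  assert (Hv : forall i, (i < d)%nat -> 0 < th 0 i <= C i)
    by (intros; rewrite Hinit; auto using init_pos, init_le).
  assert (0 <= sumr d (fun i => r i * th 0 i))
    by (apply sumr_ge0; intros i Hi; generalize (Hr_ge i Hi) (Hv i Hi); nra).
  assert (quad d M (th 0) <= sumr d (fun i => sumr d (fun j => Rabs (M i j) * (C i * C j)))).
  { apply sumr_le; intros i Hi. rewrite <- sumr_mult_l. apply sumr_le; intros j Hj.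
    destruct (Hv i Hi), (Hv j Hj).
    replace (th 0 i * (M i j * th 0 j)) with (M i j * (th 0 i * th 0 j)) by ring.
    apply Rle_trans with (Rabs (M i j) * (th 0 i * th 0 j)).
    - apply Rmult_le_compat_r; [nra|apply Rle_abs].
    - apply Rmult_le_compat_l; [apply Rabs_pos|apply Rmult_le_compat; lra]. }
  unfold energy, F0. lra.
Qed.

(* Coercivity bounds [c |th|_1^2] by twice the (nonincreasing) energy plus [r^T th]. *)
Lemma sumr_theta_le_B s : 0 <= s -> sumr d (th (s * L)) <= B.
Proof.
  intros Hs. set (v := th (s * L)). set (T := sumr d v).
  assert (Hv : forall i, (i < d)%nat -> 0 < v i) by (intros; now apply theta_eps_pos).
  assert (HT0 : 0 <= T) by (apply sumr_ge0; intros; now apply Rlt_le, Hv).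
  assert (HE : energy d M r v <= F0).
  { eapply Rle_trans; [|apply energy_init_le]. unfold v.
    apply (energy_nonincreasing th L L_pos Hsol); auto using init_pos.
    intros; apply gramM_sym. }
  assert (HrT : sumr d (fun i => r i * v i) <= K * T).
  { unfold T. rewrite <- sumr_mult_l. apply sumr_le; intros i Hi.
    generalize (Rle_abs (r i)) (Rabs_r_le i Hi) (Hv i Hi). nra. }
  assert (HcT : c * T ^ 2 <= 2 * F0 + 2 * K * T).
  { assert (Hq := Hcoer v).
    rewrite (sumr_ext d (fun i => Rabs (v i)) v) in Hq
      by (intros; apply Rabs_right, Rle_ge, Rlt_le, Hv; auto).
    unfold energy in HE. fold T in Hq. lra. }
  generalize F0_ge0. intros HF0. unfold B.
  assert (0 <= (2 * F0 + 2 * K) / c) by (apply Rdiv_le_0_compat; lra).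
  destruct (Rle_lt_dec T 1); [lra|].
  assert (T <= (2 * F0 + 2 * K) / c); [|lra].
  apply (Rmult_le_reg_l c); auto.
  replace (c * ((2 * F0 + 2 * K) / c)) with (2 * F0 + 2 * K) by (field; lra).
  nra.
Qed.

Lemma theta_le_B i s : (i < d)%nat -> 0 <= s -> th (s * L) i <= B.
Proof.
  intros Hi Hs. apply Rle_trans with (sumr d (th (s * L))); [|now apply sumr_theta_le_B].
  apply sumr_ge_term; auto. intros; now apply Rlt_le, theta_eps_pos.
Qed.

Lemma W_ge i s : (i < d)%nat -> 0 <= s -> - (ln B / L) <= W i s.
Proof.
  intros Hi Hs. generalize (theta_le_B i s Hi Hs). rewrite theta_eq_exp by auto. intros HB.
  apply ln_le in HB; [|apply exp_pos]. rewrite ln_exp in HB.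
  generalize L_pos. intros HL. apply (Rmult_le_reg_l L); auto.
  replace (L * - (ln B / L)) with (- ln B) by (field; lra). lra.
Qed.

Lemma zint_bounds i s : (i < d)%nat -> 0 <= s -> 0 <= zint th L i s <= s * B.
Proof.
  intros Hi Hs. split.
  - exact (zint_ge0 th L L_pos Hsol i s init_pos Hi Hs).
  - apply (zint_le_of_theta_le th L L_pos Hsol); auto. intros u Hu. apply theta_le_B; auto. lra.
Qed.

Lemma is_derive_W i s :
  is_derive (W i) s (- (r i - sumr d (fun j => M i j * theta_ext th (s * L) j))).
Proof.
  apply (is_derive_ext
           (fun t => (k i - ln (C i) / L) - (t * r i - sumr d (fun j => M i j * zint th L j t)))).
  - intros t. unfold W. simpl. ring.
  - eapply is_derive_eq.
    + apply (is_derive_minus (fun _ => k i - ln (C i) / L)); [apply (is_derive_const _ s)|].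
      exact (is_derive_growth th L Hsol i s).
    + unfold minus, plus, opp, zero; simpl. ring.
Qed.

(* When [W i] exceeds [dl], [th_i <= exp (- L dl)] is so small that, by (A2), [W i]
   decreases; hence once above [dl], [W i] has always been above [dl]. *)
Lemma zint_le_of_W_gt i s dl : (i < d)%nat -> 0 <= s ->
  M i i * exp (- (L * dl)) < r i -> dl < W i s -> zint th L i s <= s * exp (- (L * dl)).
Proof.
  intros Hi Hs Hdecay HW. generalize L_pos. intros HL.
  assert (Hdecr : forall x, 0 <= x -> dl < W i x ->
            - (r i - sumr d (fun j => M i j * theta_ext th (x * L) j)) < 0).
  { intros x Hx HWx.
    assert (Hsum : sumr d (fun j => M i j * theta_ext th (x * L) j)
                   <= M i i * theta_ext th (x * L) i).
    { apply (sumr_le_term d (fun j => M i j * theta_ext th (x * L) j)); auto. intros j Hj Hji.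
      rewrite theta_ext_eq by nra.
      generalize (HA2 i j Hi Hj (not_eq_sym Hji)) (theta_eps_pos j x Hj Hx). nra. }
    rewrite theta_ext_eq, theta_eq_exp in Hsum by (auto; nra).
    assert (exp (- L * W i x) < exp (- (L * dl))) by (apply exp_increasing; nra).
    generalize (gramM_diag_ge0 n X i). nra. }
  assert (Habove : forall u, 0 <= u <= s -> dl < W i u).
  { intros u Hu. destruct (Rlt_le_dec dl (W i u)) as [|Hle]; auto.
    assert (W i s <= dl); [|lra].
    apply (stays_below (W i) u s dl); [lra| |auto].
    intros x Hx. eexists. split; [apply is_derive_W|]. intros; apply Hdecr; lra. }
  apply (zint_le_of_theta_le th L L_pos Hsol); auto. intros u Hu.
  rewrite theta_eq_exp by (auto; lra). apply Rlt_le, exp_increasing.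
  generalize (Habove u ltac:(lra)). nra.
Qed.

Lemma Rabs_ln_C_div_L_le i : (i < d)%nat -> Rabs (ln (C i) / L) <= K / L.
Proof.
  intros Hi. generalize L_pos. intros HL. unfold Rdiv.
  rewrite Rabs_mult, Rabs_inv, (Rabs_right L) by lra.
  apply Rmult_le_compat_r; [apply Rlt_le, Rinv_0_lt_compat; lra|now apply Rabs_ln_C_le].
Qed.

Lemma W_abs_le i s : 1 <= L -> (i < d)%nat -> 0 <= s <= S -> Rabs (W i s) <= Wup.
Proof.
  intros HL1 Hi Hs.
  assert (Hk_i := Rabs_k_le i Hi).
  assert (HC_i : Rabs (ln (C i) / L) <= K).
  { eapply Rle_trans; [now apply Rabs_ln_C_div_L_le|].
    unfold Rdiv. rewrite <- (Rmult_1_r K) at 2. apply Rmult_le_compat_l; [lra|].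
    rewrite <- Rinv_1. apply Rinv_le_contravar; lra. }
  assert (Hr_i : Rabs (s * r i) <= S * K).
  { rewrite Rabs_mult, (Rabs_right s) by lra.
    apply Rmult_le_compat; [lra|apply Rabs_pos|lra|now apply Rabs_r_le]. }
  assert (HMz : Rabs (sumr d (fun j => M i j * zint th L j s)) <= INR d * K * (S * B)).
  { eapply Rle_trans; [apply Rabs_sumr_le|]. rewrite Rmult_assoc. apply sumr_le_const.
    intros j Hj. destruct (zint_bounds j s Hj ltac:(lra)).
    rewrite Rabs_mult, (Rabs_right (zint th L j s)) by lra.
    apply Rmult_le_compat; [apply Rabs_pos|lra|now apply Rabs_M_le|generalize B_ge1; nra]. }
  apply Rabs_le_between in Hk_i, HC_i, Hr_i, HMz.
  unfold W, Wup. apply Rabs_le_between. lra.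
Qed.

Lemma W_sub_w i s : (i < d)%nat -> 0 <= s ->
  W i s - w s i = - (ln (C i) / L) + sumr d (fun j => M i j * (zint th L j s - z s j)).
Proof.
  intros Hi Hs. destruct (proj1 (Hwz s Hs) i Hi) as [-> _].
  rewrite (sumr_ext d (fun j => M i j * (zint th L j s - z s j))
                      (fun j => M i j * zint th L j s - M i j * z s j)) by (intros; ring).
  rewrite sumr_minus. unfold W. ring.
Qed.

(* Approximate complementarity: [zint_j W_j <= S B dl] where [W_j <= dl], and
   [zint_j <= S exp (- L dl) <= S / (L dl)] where [W_j > dl]. *)
Lemma z_error_sq_le dl s : 1 <= L -> 0 < dl -> K < L * dl * rmin -> 0 <= s <= S ->
  c * (sumr d (fun j => Rabs (zint th L j s - z s j))) ^ 2
    <= INR d * (S * B * dl + (S * Wup / dl + Zb * ln B + Dm * K) / L).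
Proof.
  intros HL1 Hdl Hsmall Hs. destruct (Hwz s ltac:(lra)) as [Hlcp Hcompl].
  assert (HB := B_ge1). assert (HWup := Wup_ge0).
  assert (HlnB : 0 <= ln B) by (rewrite <- ln_1; apply ln_le; lra).
  assert (Hexp : exp (- (L * dl)) < / (L * dl)) by (apply exp_neg_lt_inv; nra).
  assert (HinvLdl : 0 < / (L * dl)) by (apply Rinv_0_lt_compat; nra).
  assert (Hdecay : forall j, (j < d)%nat -> M j j * exp (- (L * dl)) < r j).
  { intros j Hj. assert (HKL : K * / (L * dl) < rmin).
    { apply (Rmult_lt_reg_r (L * dl)); [nra|]. rewrite Rmult_assoc, Rinv_l by nra. lra. }
    generalize (Rle_abs (M j j)) (Rabs_M_le j j Hj Hj) (gramM_diag_ge0 n X j).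
    generalize (exp_pos (- (L * dl))) (Hr_ge j Hj). nra. }
  replace (S * B * dl + (S * Wup / dl + Zb * ln B + Dm * K) / L)
    with ((S * B * dl + S * Wup / (L * dl)) + Zb * (ln B / L) + Dm * (K / L)) by (field; lra).
  apply (lcp_perturbation d M c _ (fun j => W j s) _ (w s) (fun j => - (ln (C j) / L))); auto.
  - apply Rdiv_le_0_compat; lra.
  - intros j Hj. generalize (W_sub_w j s Hj ltac:(lra)). lra.
  - intros j Hj. destruct (zint_bounds j s Hj ltac:(lra)) as [Hz0 HzB].
    split; [auto|split; [apply W_ge; auto; lra|]].
    assert (0 <= S * Wup / (L * dl)) by (unfold Rdiv; apply Rmult_le_pos; nra).
    assert (zint th L j s <= S * B) by nra.
    destruct (Rle_lt_dec (W j s) dl) as [Hle|Hgt]; [nra|].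
    assert (zint th L j s <= S * / (L * dl)).
    { eapply Rle_trans; [apply zint_le_of_W_gt; auto; lra|].
      generalize (exp_pos (- (L * dl))). nra. }
    assert (W j s <= Wup) by (eapply Rle_trans; [apply Rle_abs|apply W_abs_le; auto]).
    unfold Rdiv. nra.
  - intros j Hj. split; [apply (Hlcp j Hj)|now apply z_le_Zb].
  - intros j Hj. split; [rewrite Rabs_Ropp; now apply Rabs_ln_C_div_L_le|].
    destruct (zint_bounds j s Hj ltac:(lra)). destruct (z_le_Zb s j Hs Hj).
    apply Rabs_le_between. unfold Dm. nra.
Qed.

Lemma w_error_le i s : (i < d)%nat -> 0 <= s ->
  Rabs (w_eps th eps s i - w s i) <= K / L + K * sumr d (fun j => Rabs (zint th L j s - z s j)).
Proof.
  intros Hi Hs. rewrite w_eps_eq, W_sub_w by auto.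
  eapply Rle_trans; [apply Rabs_triang|]. apply Rplus_le_compat.
  - rewrite Rabs_Ropp. now apply Rabs_ln_C_div_L_le.
  - eapply Rle_trans; [apply Rabs_sumr_le|]. rewrite <- sumr_mult_l. apply sumr_le.
    intros j Hj. rewrite Rabs_mult. apply Rmult_le_compat_r; [apply Rabs_pos|now apply Rabs_M_le].
Qed.

End Fixed_eps.

Lemma rescaled_convergence eta : 0 < eta ->
  exists L0, forall eps, 0 < eps < 1 -> L0 < ln (/ eps) ->
  forall s, 0 <= s <= S -> forall i, (i < d)%nat ->
    Rabs (w_eps (theta eps) eps s i - w s i) < eta /\
    Rabs (z_eps (theta eps) eps s i - z s i) < eta.
Proof.
  intros Heta.
  set (tau := eta / (2 * (1 + K))).
  assert (Htau : 0 < tau) by (unfold tau; apply Rdiv_lt_0_compat; lra).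
  assert (Hctau : 0 < c * tau ^ 2) by (apply Rmult_lt_0_compat; [lra|apply pow_lt; lra]).
  assert (HdSB : 0 <= INR d * S * B)
    by (generalize (pos_INR d) B_ge1; intros; repeat apply Rmult_le_pos; lra).
  set (dl := c * tau ^ 2 / (2 * (1 + INR d * S * B))).
  assert (Hdl : 0 < dl) by (unfold dl; apply Rdiv_lt_0_compat; lra).
  set (Q := INR d * (S * Wup / dl + Zb * ln B + Dm * K)).
  exists (Rmax 1 (Rmax (K / (dl * rmin)) (Rmax (2 * Q / (c * tau ^ 2)) (2 * K / eta)))).
  intros eps Heps HL s Hs i Hi.
  rewrite !Rmax_Rlt, !Rlt_div_l in HL by nra.
  destruct HL as [HL1 [Hdecay [HLQ HLK]]].
  set (L := ln (/ eps)) in *.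
  set (D := sumr d (fun j => Rabs (zint (theta eps) L j s - z s j))).
  assert (HD0 : 0 <= D) by (apply sumr_ge0; intros; apply Rabs_pos).
  assert (Htau_eq : tau * (2 * (1 + K)) = eta) by (unfold tau; field; lra).
  assert (Hdl_eq : dl * (2 * (1 + INR d * S * B)) = c * tau ^ 2) by (unfold dl; field; lra).
  assert (HD : D < tau).
  { assert (HQL : Q / L < c * tau ^ 2 / 2) by (apply Rlt_div_l; lra).
    assert (c * D ^ 2 < c * tau ^ 2).
    { eapply Rle_lt_trans; [apply (z_error_sq_le eps Heps dl s); fold L; auto; nra|]. fold L.
      replace (INR d * (S * B * dl + (S * Wup / dl + Zb * ln B + Dm * K) / L))
        with (INR d * S * B * dl + Q / L) by (unfold Q; field; lra).
      nra. }
    destruct (Rlt_le_dec D tau) as [|Hle]; auto.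
    assert (tau ^ 2 <= D ^ 2) by (apply pow_incr; lra). nra. }
  split.
  - eapply Rle_lt_trans; [apply (w_error_le eps Heps); auto; lra|]. fold L D.
    assert (K / L < eta / 2) by (apply Rlt_div_l; lra).
    assert (K * D <= K * tau) by (apply Rmult_le_compat_l; lra).
    nra.
  - rewrite (z_eps_eq eps Heps) by lra. fold L.
    apply Rle_lt_trans with D; [|nra].
    apply (sumr_ge_term d (fun j => Rabs (zint (theta eps) L j s - z s j))); auto.
    intros; apply Rabs_pos.
Qed.

End Convergence.

Theorem proposition4 (n d : nat) (X : nat -> nat -> R) (y : nat -> R)
  (HA1 : forall i, (i < d)%nat -> 0 < corr_r n X y i)
  (HA2 : forall i j, (i < d)%nat -> (j < d)%nat -> i <> j -> gramM n X i j <= 0)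
  (C k : nat -> R)
  (HC : forall i, (i < d)%nat -> 0 < C i)
  (Hk : forall i, (i < d)%nat -> 0 < k i)
  (theta : R -> R -> nat -> R)
  (Htheta : forall eps, 0 < eps < 1 ->
     solves_ODE d (gramM n X) (corr_r n X y)
       (fun i => C i * Rpower eps (k i)) (theta eps))
  (w z : R -> nat -> R)
  (Hwz : forall s, 0 <= s -> solves_LCP d (gramM n X) (corr_r n X y) k s (w s) (z s)) :
  forall S, 0 <= S -> forall eta, 0 < eta ->
  exists delta, 0 < delta /\
    forall eps, 0 < eps < delta -> eps < 1 ->
    forall s, 0 <= s <= S -> forall i, (i < d)%nat ->
      Rabs (w_eps (theta eps) eps s i - w s i) < eta /\
      Rabs (z_eps (theta eps) eps s i - z s i) < eta.
Proof.
  intros S HS eta Heta.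
  destruct (gramM_coercive n d X y HA1 HA2) as [c [Hc0 Hcoer]].
  destruct (exists_pos_lower_bound d _ HA1) as [rmin [Hrmin Hr_ge]].
  destruct (exists_Rabs_bound d (fun i j => Rabs (corr_r n X y i) + Rabs (k i)
              + Rabs (ln (C i)) + Rabs (gramM n X i j))) as [K [HK0 HK]].
  destruct (rescaled_convergence n d X y C k theta HA2 HC Hk Htheta c rmin K Hc0 Hcoer
              Hrmin Hr_ge HK0 (fun i j Hi Hj => Rle_trans _ _ _ (Rle_abs _) (HK i j Hi Hj))
              w z S HS Hwz eta Heta) as [L0 HL0].
  exists (exp (- L0)). split; [apply exp_pos|].
  intros eps [Heps0 Heps] Heps1. apply HL0; [lra|].
  assert (ln eps < - L0) by (rewrite <- (ln_exp (- L0)); apply ln_increasing; lra).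
  rewrite ln_Rinv by lra. lra.
Qed.
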